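(* Let $\odot$ be a pseudo-multiplication on $[0,\infty]$ with left identity $1_{\odot}$, and let $O(t)=\inf_{s>0} s\odot t$. Then there exists some $t>0$ which is $\odot$-finite (i.e. $O(t)=0$) if and only if $1_{\odot}$ is $\odot$-finite (i.e. $O(1_{\odot})=0$).
   Context: A pseudo-multiplication is a binary operation $\odot:[0,\infty]\times[0,\infty]\to[0,\infty]$ such that: $\odot$ is associative; $\odot$ is continuous on $(0,\infty)\times[0,\infty]$; for every $t$, the map $s\mapsto s\odot t$ is continuous on $(0,\infty]$; $\odot$ is nondecreasing in each argument; there is a left identity element $1_{\odot}$, i.e. $1_{\odot}\odot t=t$ for all $t$; there are no zero divisors, i.e. $s\odot t=0$ implies $s=0$ or $t=0$; and $0$ is an annihilator, i.e. $0\odot t=t\odot 0=0$ for all $t$. For $t\in[0,\infty]$ put $O(t)=\inf_{s>0} s\odot t$. An element $t$ is called $\odot$-finite if $O(t)=0$, and $\odot$-infinite otherwise. *)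

From HB Require Import structures.
From mathcomp Require Import all_boot all_order all_algebra.
From mathcomp Require Import all_classical all_reals all_analysis.
Set Implicit Arguments. Unset Strict Implicit. Unset Printing Implicit Defensive.
Import Order.TTheory GRing.Theory Num.Theory.
Local Open Scope classical_set_scope.
Local Open Scope ereal_scope.

(* A pseudo-multiplication on [0,+oo], encoded as a binary operation on \bar R
   whose axioms are required only on nonnegative arguments. [one] is the left
   identity 1_odot. *)
Record pseudo_mult (R : realType) (op : \bar R -> \bar R -> \bar R) (one : \bar R)
  : Prop := PseudoMult {
  pm_range : forall s t, 0 <= s -> 0 <= t -> 0 <= op s t;
  pm_assoc : forall s t u, 0 <= s -> 0 <= t -> 0 <= u ->
      op (op s t) u = op s (op t u);
  pm_cont : {within [set p : \bar R * \bar R | 0 < p.1 < +oo /\ 0 <= p.2],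
              continuous (fun p => op p.1 p.2)};
  pm_cont_left : forall t, 0 <= t ->
      {within [set s : \bar R | 0 < s], continuous (fun s => op s t)};
  pm_mono : forall s s' t t', 0 <= s -> s <= s' -> 0 <= t -> t <= t' ->
      op s t <= op s' t';
  pm_one_ge0 : 0 <= one;
  pm_left_id : forall t, 0 <= t -> op one t = t;
  pm_no_zero_div : forall s t, 0 <= s -> 0 <= t -> op s t = 0 -> s = 0 \/ t = 0;
  pm_annihil : forall t, 0 <= t -> op 0 t = 0 /\ op t 0 = 0
}.

Definition pmO (R : realType) (op : \bar R -> \bar R -> \bar R) (t : \bar R) : \bar R :=
  ereal_inf [set op s t | s in [set s : \bar R | 0 < s]].

Definition pm_finite (R : realType) (op : \bar R -> \bar R -> \bar R) (t : \bar R) : Prop :=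
  pmO op t = 0.

From mathcomp Require Import all_boot all_order all_algebra.
From mathcomp Require Import all_classical all_reals all_analysis.
Set Implicit Arguments. Unset Strict Implicit. Unset Printing Implicit Defensive.
Import Order.TTheory GRing.Theory Num.Theory.
Local Open Scope classical_set_scope.
Local Open Scope ereal_scope.

(* The left identity cannot be 0 since 0 is an annihilator; and for t > 0,
   O(1) odot t <= O(1 odot t) = O(t), so O(t) = 0 forces O(1) odot t = 0,
   whence O(1) = 0 as there are no zero divisors. *)

Section PseudoMultiplication.
Variables (R : realType) (op : \bar R -> \bar R -> \bar R) (one : \bar R).
Hypothesis Hpm : pseudo_mult op one.

Lemma pmO_ge0 {t} : 0 <= t -> 0 <= pmO op t.
Proof.
move=> t0; apply: le_ereal_inf_tmp => _ [s /= s0 <-].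
exact: (pm_range Hpm (ltW s0) t0).
Qed.

Lemma pmO_mul_le u t : 0 <= u -> 0 <= t -> op (pmO op u) t <= pmO op (op u t).
Proof.
move=> u0 t0; apply: le_ereal_inf_tmp => _ [s /= s0 <-].
rewrite -(pm_assoc Hpm (ltW s0) u0 t0).
apply: (pm_mono Hpm) => //; first exact: pmO_ge0.
by apply: ereal_inf_lbound; exists s.
Qed.

Lemma pm_one_gt0 : 0 < one.
Proof.
rewrite lt_neqAle (pm_one_ge0 Hpm) andbT; apply/negP => /eqP one_eq0.
have := pm_left_id Hpm lee01.
by rewrite -one_eq0 (pm_annihil Hpm lee01).1 => /eqP; rewrite eq_sym onee_eq0.
Qed.

Lemma pm_finite_one_of_pos {t} : 0 < t -> pm_finite op t -> pm_finite op one.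
Proof.
move=> t_gt0 Ot0; have t0 := ltW t_gt0.
have O1_ge0 := pmO_ge0 (pm_one_ge0 Hpm).
have O1t_eq0 : op (pmO op one) t = 0.
  apply/eqP; rewrite eq_le (pm_range Hpm O1_ge0 t0) andbT.
  by rewrite -Ot0 -{2}(pm_left_id Hpm t0) pmO_mul_le // (pm_one_ge0 Hpm).
case: (pm_no_zero_div Hpm O1_ge0 t0 O1t_eq0) => // t_eq0.
by move: t_gt0; rewrite t_eq0 ltxx.
Qed.

End PseudoMultiplication.

Theorem lemma2p2 (R : realType) (op : \bar R -> \bar R -> \bar R) (one : \bar R)
  (Hpm : pseudo_mult op one) :
  (exists t : \bar R, 0 < t /\ pm_finite op t) <-> pm_finite op one.
Proof.
split=> [[t [t_gt0 Ot0]]|O1].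
- exact: (pm_finite_one_of_pos Hpm t_gt0 Ot0).
- by exists one; split=> //; exact: (pm_one_gt0 Hpm).
Qed.
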